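(* Let $\mathbb{K}$ be a field of characteristic $0$, $R=\mathbb{K}[x_1,\dots,x_n]$, and let $I\subseteq R$ be an unmixed ideal with minimal primary decomposition $I=q_1\cap\dots\cap q_r$. For $i=1,\dots,r$ let $N_i$ be a set of Noetherian operators for $q_i$. For each $D\in\bigcup_i N_i$, choose $h_D\in\bigcap_{j:\,D\notin N_j}\sqrt{q_j}\setminus\bigcup_{i:\,D\in N_i}\sqrt{q_i}$. Then $N:=\{h_DD: D\in\bigcup_iN_i\}$ is a set of Noetherian operators for $I$.
   Context: $W_R=R\langle\partial_1,\dots,\partial_n\rangle$ is the Weyl algebra ($\partial_i=\partial/\partial x_i$) acting on $R$, written $D\bullet f$. A set $N\subseteq W_R$ is a set of Noetherian operators for an ideal $J$ if for all $f\in R$: $f\in J\iff D\bullet f\in\sqrt J$ for all $D\in N$. An ideal is unmixed if all its associated primes have the same dimension (in particular it has no embedded primes). An empty intersection of ideals is $R$. *)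

From HB Require Import structures.
From mathcomp Require Import all_boot all_order all_algebra.
From mathcomp Require Import finmap.
From mathcomp.multinomials Require Import monalg mpoly.

Set Implicit Arguments.
Unset Strict Implicit.
Unset Printing Implicit Defensive.

Import GRing.Theory.
Local Open Scope ring_scope.

Notation PolyR K n := {mpoly K[n]}.

(* The Weyl algebra W_R = R<d_1..d_n>, represented in normal form:
   every element is uniquely a finite sum  sum_a c_a d^a  with coefficients
   c_a in R written on the left of d^a = d_1^a_1 ... d_n^a_n.  We only use
   its left R-module structure (h *: D = h * D in W_R, coefficientwise). *)
Definition Weyl (K : fieldType) (n : nat) := {malg (PolyR K n)['X_{1..n}]}.

Definition wact (K : fieldType) (n : nat) (D : Weyl K n) (f : PolyR K n)
  : PolyR K n :=
  \sum_(a <- (monalg.msupp D : seq _)) monalg.mcoeff a D * mderivm a f.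

Definition is_ideal (K : fieldType) (n : nat) (J : PolyR K n -> Prop) : Prop :=
  [/\ J 0, (forall a b, J a -> J b -> J (a + b)) &
      (forall r a, J a -> J (r * a))].

Definition is_prime (K : fieldType) (n : nat) (P : PolyR K n -> Prop) : Prop :=
  [/\ is_ideal P, ~ P 1 & forall a b, P (a * b) -> P a \/ P b].

Definition is_primary (K : fieldType) (n : nat) (Q : PolyR K n -> Prop) : Prop :=
  [/\ is_ideal Q, ~ Q 1 &
      forall a b, Q (a * b) -> Q a \/ exists k : nat, Q (b ^+ k)].

Definition radical (K : fieldType) (n : nat) (J : PolyR K n -> Prop)
  : PolyR K n -> Prop := fun f => exists k : nat, J (f ^+ k).

Definition same_ideal (K : fieldType) (n : nat) (J1 J2 : PolyR K n -> Prop) :=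
  forall f, J1 f <-> J2 f.

(* Krull dimension of R/P is >= k : there is a chain of primes
   P = P_0 ⊊ P_1 ⊊ ... ⊊ P_k. *)
Definition prime_chain_from (K : fieldType) (n : nat)
  (P : PolyR K n -> Prop) (k : nat) : Prop :=
  exists C : nat -> (PolyR K n -> Prop),
    same_ideal (C 0%N) P /\
    (forall i, (i <= k)%N -> is_prime (C i)) /\
    (forall i, (i < k)%N ->
       (forall f, C i f -> C i.+1 f) /\ exists f, C i.+1 f /\ ~ C i f).

Definition same_dim (K : fieldType) (n : nat) (P1 P2 : PolyR K n -> Prop) :=
  forall k, prime_chain_from P1 k <-> prime_chain_from P2 k.

Definition associated_prime (K : fieldType) (n : nat)
  (I P : PolyR K n -> Prop) : Prop :=
  is_prime P /\ exists f, same_ideal P (fun g => I (g * f)).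

Definition unmixed (K : fieldType) (n : nat) (I : PolyR K n -> Prop) : Prop :=
  forall P1 P2, associated_prime I P1 -> associated_prime I P2 -> same_dim P1 P2.

Definition min_primary_decomposition (K : fieldType) (n r : nat)
  (I : PolyR K n -> Prop) (q : 'I_r -> (PolyR K n -> Prop)) : Prop :=
  [/\ forall i, is_primary (q i),
      same_ideal I (fun f => forall i, q i f),
      (forall i j, i != j -> ~ same_ideal (radical (q i)) (radical (q j))) &
      (forall i, ~ same_ideal I (fun f => forall j, j != i -> q j f))].

Definition noetherian_operators (K : fieldType) (n : nat)
  (J : PolyR K n -> Prop) (N : Weyl K n -> Prop) : Prop :=
  forall f, J f <-> (forall D, N D -> radical J (wact D f)).

From HB Require Import structures.
From mathcomp Require Import all_boot all_order all_algebra.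
From mathcomp Require Import finmap.
From mathcomp.multinomials Require Import monalg mpoly.
From Stdlib Require Import Classical.

(* A polynomial lies in I iff it lies in every q_i, and the radical of a
   finite intersection of ideals is the intersection of the radicals.  If D
   lies in N_i, then h_D lies outside the prime sqrt(q_i), so since q_i is
   primary, h_D (D . f) is in sqrt(q_i) iff D . f is; if D does not lie in
   N_j, then h_D already lies in sqrt(q_j). *)

Set Implicit Arguments.
Unset Strict Implicit.
Unset Printing Implicit Defensive.

Import GRing.Theory.
Local Open Scope ring_scope.

Section Radicals.

Variables (K : fieldType) (n : nat).
Implicit Types (J Q : PolyR K n -> Prop) (a b g : PolyR K n).

Lemma wactZ (c : PolyR K n) (D : Weyl K n) f :
  wact (c *: D) f = c * wact D f.
Proof.
rewrite /wact monalg.msuppZ; case: eqP => [->|_]; first by rewrite mul0r big_nil.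
rewrite big_distrr; apply: eq_bigr => a _.
by rewrite monalg.mcoeffZ; apply: esym; apply: mulrA.
Qed.

Lemma ideal_expr_leq J g k m :
  is_ideal J -> J (g ^+ k) -> (k <= m)%N -> J (g ^+ m).
Proof. by case=> _ _ Jmul Jk /subnKC <-; rewrite exprD mulrC; apply: Jmul. Qed.

Lemma radical_mull J a b : is_ideal J -> radical J b -> radical J (a * b).
Proof. by case=> _ _ Jmul [k Jk]; exists k; rewrite exprMn; apply: Jmul. Qed.

Lemma radical_mulr J a b : is_ideal J -> radical J a -> radical J (a * b).
Proof. by rewrite mulrC; apply: radical_mull. Qed.

Lemma radical_same_ideal J1 J2 g :
  same_ideal J1 J2 -> radical J1 g <-> radical J2 g.
Proof. by move=> J12; split=> -[k Jk]; exists k; apply/J12. Qed.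

Lemma radical_bigcap (ι : finType) (q : ι -> PolyR K n -> Prop) g :
  (forall i, is_ideal (q i)) ->
  radical (fun f => forall i, q i f) g <-> forall i, radical (q i) g.
Proof.
move=> qideal; split=> [[k qk] i|qg]; first by exists k.
have [k qk] := fin_all_exists qg.
exists (\max_i k i) => i.
by apply: (ideal_expr_leq (qideal i) (qk i)); apply: leq_bigmax.
Qed.

Lemma primary_radical_cancell Q a b :
  is_primary Q -> ~ radical Q a -> radical Q (a * b) -> radical Q b.
Proof.
case=> _ _ Qprimary Qa [k]; rewrite exprMn => /Qprimary [Qak|[m Qbkm]].
  by case: Qa; exists k.
by exists (k * m)%N; rewrite exprM.
Qed.

End Radicals.

Section ScaledOperators.

Variables (K : fieldType) (n : nat) (ι : Type).
Variables (q : ι -> PolyR K n -> Prop) (N : ι -> Weyl K n -> Prop).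
Variable h : Weyl K n -> PolyR K n.

Hypothesis q_primary : forall i, is_primary (q i).
Hypothesis N_noetherian : forall i, noetherian_operators (q i) (N i).
Hypothesis h_separates : forall D, (exists i, N i D) ->
  (forall j, ~ N j D -> radical (q j) (h D)) /\
  (forall i, N i D -> ~ radical (q i) (h D)).

Lemma radical_wact_scaled D f j :
  (exists i, N i D) -> (forall i, q i f) -> radical (q j) (wact (h D *: D) f).
Proof.
move=> ND qf; rewrite wactZ.
have qj_ideal : is_ideal (q j) by case: (q_primary j).
have [NjD|NjD] := classic (N j D).
  by apply: radical_mull qj_ideal _; apply: (N_noetherian j f).1 (qf j) D NjD.
exact: radical_mulr qj_ideal ((h_separates ND).1 j NjD).
Qed.

Lemma mem_of_radical_wact_scaled f i :
  (forall D, (exists j, N j D) -> radical (q i) (wact (h D *: D) f)) -> q i f.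
Proof.
move=> radf; apply/(N_noetherian i) => D NiD.
have ND : exists j, N j D by exists i.
apply: (primary_radical_cancell (q_primary i) ((h_separates ND).2 i NiD)).
by rewrite -wactZ; apply: radf.
Qed.

End ScaledOperators.

Theorem proposition5p2 (K : fieldType) (charK0 : [pchar K] =i pred0)
  (n r : nat) (I : PolyR K n -> Prop) (q : 'I_r -> (PolyR K n -> Prop))
  (N : 'I_r -> (Weyl K n -> Prop)) (h : Weyl K n -> PolyR K n)
  (hI : is_ideal I) (hunm : unmixed I)
  (hdec : min_primary_decomposition I q)
  (hN : forall i, noetherian_operators (q i) (N i))
  (hh : forall D, (exists i, N i D) ->
          (forall j, ~ N j D -> radical (q j) (h D)) /\
          (forall i, N i D -> ~ radical (q i) (h D))) :
  noetherian_operators I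
    (fun E => exists2 D, (exists i, N i D) & E = h D *: D).
Proof.
case: hdec => q_primary Iq _ _.
have q_ideal i : is_ideal (q i) by case: (q_primary i).
have radI g : radical I g <-> forall i, radical (q i) g.
  exact: iff_trans (radical_same_ideal g Iq) (radical_bigcap g q_ideal).
move=> f; split=> [/Iq qf E [D ND ->]|radf].
  by apply/radI => j; apply: radical_wact_scaled.
apply/Iq => i; apply: (mem_of_radical_wact_scaled q_primary hN hh) => D ND.
by apply: (radI _).1 (radf _ _) i; exists D.
Qed.
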